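(* Let $q$ be a prime power, $\mathbb{L}=\mathrm{GF}(q^m)$, and $\ell\mid m$. Let $$\mathcal{C}_\ell=\{(b,b^q,\ldots,b^{q^{\ell-1}}) : b\in\mathrm{GF}(q^\ell)\}\subseteq\mathbb{L}^\ell.$$ In the symbol Hamming metric on $\mathbb{L}^\ell$, the covering radius of $\mathcal{C}_\ell$ is $\ell$ if $\ell<m$ and $\ell-1$ if $\ell=m$.
   Context: The symbol Hamming distance between $x,y\in\mathbb{L}^\ell$ is $|\{i : x_i\ne y_i\}|$. The covering radius of a code $\mathcal{C}\subseteq\mathbb{L}^\ell$ is $\max_{x\in\mathbb{L}^\ell}\min_{c\in\mathcal{C}}d(x,c)$. $\mathrm{GF}(q^\ell)$ is the unique subfield of $\mathbb{L}$ of size $q^\ell$. *)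

From HB Require Import structures.
From mathcomp Require Import all_boot all_order all_algebra all_field.
Set Implicit Arguments. Unset Strict Implicit. Unset Printing Implicit Defensive.
Import GRing.Theory.

Definition prime_power (q : nat) : Prop := exists p k, prime p /\ 0 < k /\ q = p ^ k.

Definition is_subfield (L : finFieldType) (K : {set L}) : Prop :=
  (1%R \in K) /\
  (forall x y, x \in K -> y \in K -> (x - y)%R \in K) /\
  (forall x y, x \in K -> y \in K -> (x * y)%R \in K) /\
  (forall x, x \in K -> (x^-1)%R \in K).

Definition hamming (L : finFieldType) (n : nat) (x y : 'rV[L]_n) : nat :=
  #|[set i : 'I_n | x ord0 i != y ord0 i]|.

(* covering radius: max over x of min over c in C of d(x,c)
   (for empty C the inner min defaults to n; irrelevant here) *)
Definition covering_radius (L : finFieldType) (n : nat) (C : {set 'rV[L]_n}) : nat :=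
  \max_(x : 'rV[L]_n) \big[minn/n]_(c in C) hamming x c.

Definition frob_code (L : finFieldType) (q ell : nat) (K : {set L}) : {set 'rV[L]_ell} :=
  [set ((\row_(i < ell) (b ^+ (q ^ i)%N))%R) | b in K].

From mathcomp Require Import all_boot all_order all_algebra all_field.
From mathcomp Require Import zify.
Set Implicit Arguments.
Unset Strict Implicit.
Unset Printing Implicit Defensive.

Import Order.TTheory GRing.Theory.

(* Every codeword has all its entries in GF(q^ell).  If ell < m, the constant
   word (a, ..., a) with a outside GF(q^ell) therefore disagrees with every
   codeword everywhere, so the radius is the full length ell.  If ell = m, the
   codeword of b = x_0 agrees with any x in position 0, giving radius at most
   ell - 1; conversely, as y |-> y^(q^i) is injective, the word
   x_i = e_i^(q^i) built from pairwise distinct e_i agrees with the codeword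
   of b only in positions where e_i = b, i.e. in at most one position. *)

Section Hamming.
Variables (F : finFieldType) (n : nat).
Implicit Types x y : 'rV[F]_n.

Lemma hamming_add_agreements x y :
  hamming x y + #|[set i : 'I_n | x ord0 i == y ord0 i]| = n.
Proof.
rewrite /hamming -[RHS]card_ord -(cardsC [set i | x ord0 i != y ord0 i]).
by congr (_ + _); apply: eq_card => i; rewrite !inE negbK.
Qed.

Lemma hamming_le_pred x y i : x ord0 i = y ord0 i -> hamming x y <= n.-1.
Proof.
move=> xy_i; have := hamming_add_agreements x y.
have : 0 < #|[set j : 'I_n | x ord0 j == y ord0 j]|.
  by apply/card_gt0P; exists i; rewrite inE xy_i.
lia.
Qed.

Lemma hamming_ge_pred x y :
    (forall i j, x ord0 i = y ord0 i -> x ord0 j = y ord0 j -> i = j) ->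
  n.-1 <= hamming x y.
Proof.
move=> agree_once; have := hamming_add_agreements x y.
have : #|[set i : 'I_n | x ord0 i == y ord0 i]| <= 1.
  by apply/card_le1_eqP => i j; rewrite !inE => /eqP xy_i /eqP xy_j; apply: agree_once.
lia.
Qed.

Lemma hamming_nowhere_equal x y :
  (forall i, x ord0 i != y ord0 i) -> hamming x y = n.
Proof.
move=> neq_xy; rewrite -[RHS](hamming_add_agreements x y).
suff -> : [set i : 'I_n | x ord0 i == y ord0 i] = set0 by rewrite cards0 addn0.
by apply/setP => i; rewrite !inE (negPf (neq_xy i)).
Qed.

End Hamming.

Section CoveringRadius.
Variables (F : finFieldType) (n : nat) (C : {set 'rV[F]_n}).

Lemma covering_radius_le_length : covering_radius C <= n.
Proof. by apply/bigmax_leqP => x _; exact: (@bigmin_le_id _ nat). Qed.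

Lemma covering_radius_le r :
  (forall x, exists2 c, c \in C & hamming x c <= r) -> covering_radius C <= r.
Proof.
move=> covered; apply/bigmax_leqP => x _; have [c cC dxc] := covered x.
exact: leq_trans ((@bigmin_le_cond _ nat) _ _ _ _ _ cC) dxc.
Qed.

Lemma covering_radius_ge r x :
  r <= n -> (forall c, c \in C -> r <= hamming x c) -> r <= covering_radius C.
Proof.
move=> r_le_n far_x; apply: leq_trans (leq_bigmax x).
exact: (@le_bigmin _ nat).
Qed.

End CoveringRadius.

Lemma subfield_exprn (L : finFieldType) (K : {set L}) b j :
  is_subfield K -> b \in K -> (b ^+ j)%R \in K.
Proof.
move=> [K1 [_ [KM _]]] bK; elim: j => [|j IHj]; first by rewrite expr0.
by rewrite exprS KM.
Qed.

Lemma expr_pow_inj (L : finFieldType) q m i :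
  #|L| = q ^ m -> i <= m -> injective (fun y : L => (y ^+ (q ^ i))%R).
Proof.
move=> cardL le_im y z /(congr1 (fun t => (t ^+ (q ^ (m - i)))%R)).
by rewrite -!exprM -expnD subnKC // -cardL !expf_card.
Qed.

Lemma card_pow_base_gt1 (L : finFieldType) q m : #|L| = q ^ m -> 1 < q.
Proof.
move=> cardL; have := card_finNzRing_gt1 L; rewrite cardL {cardL}.
by case: q => [|[|//]]; rewrite ?exp1n //; case: m => // k; rewrite exp0n.
Qed.

Section FrobeniusCode.
Variables (L : finFieldType) (q ell : nat).

Lemma covering_radius_frob_code_proper (K : {set L}) a :
  is_subfield K -> a \notin K -> covering_radius (frob_code q ell K) = ell.
Proof.
move=> subK aK; apply/eqP; rewrite eqn_leq covering_radius_le_length /=.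
apply: (covering_radius_ge (x := const_mx a)) => // _ /imsetP[b bK ->].
rewrite hamming_nowhere_equal // => i; rewrite !mxE.
by apply: contra aK => /eqP ->; exact: subfield_exprn.
Qed.

Lemma covering_radius_frob_code_full :
  #|L| = q ^ ell -> 0 < ell -> covering_radius (frob_code q ell [set: L]) = ell.-1.
Proof.
move=> cardL ell_gt0; pose i0 : 'I_ell := Ordinal ell_gt0.
apply/eqP; rewrite eqn_leq; apply/andP; split.
  apply: covering_radius_le => x; pose b := x ord0 i0.
  exists (\row_(i < ell) b ^+ (q ^ i))%R; first by apply/imsetP; exists b; rewrite ?inE.
  by apply: (hamming_le_pred (i := i0)); rewrite mxE expn0 expr1.
have q_gt1 := card_pow_base_gt1 cardL.
have le_ell_L : ell <= #|L| by rewrite cardL ltnW // ltn_expl.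
pose e (i : 'I_ell) : L := enum_val (widen_ord le_ell_L i).
have e_inj : injective e.
  by move=> i j /enum_val_inj/(congr1 val) ij; apply: val_inj.
apply: (covering_radius_ge (x := \row_i (e i ^+ (q ^ i))%R)) => [|_ /imsetP[b _ ->]].
  exact: leq_pred.
apply: hamming_ge_pred => i j; rewrite !mxE.
move=> /(expr_pow_inj cardL (ltnW (ltn_ord i))) ei_b.
move=> /(expr_pow_inj cardL (ltnW (ltn_ord j))) ej_b.
by apply: e_inj; rewrite ei_b ej_b.
Qed.

End FrobeniusCode.

Theorem theorem10p2 (L : finFieldType) (q m ell : nat) (K : {set L}) :
  prime_power q ->
  #|L| = q ^ m ->
  ell %| m ->
  is_subfield K -> #|K| = q ^ ell ->
  covering_radius (frob_code q ell K) = (if ell < m then ell else ell.-1).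
Proof.
(* That q is a prime power is forced by the existence of L. *)
move=> _ cardL ell_dvd_m subK cardK.
have m_gt0 : 0 < m.
  by have := card_finNzRing_gt1 L; rewrite cardL; case: m {cardL ell_dvd_m}.
have q_gt1 := card_pow_base_gt1 cardL.
case: ltnP => [ell_lt_m | le_m_ell].
  have /subsetPn[a _ aK] : ~~ ([set: L] \subset K).
    rewrite subTset; apply: contraTneq ell_lt_m => K_full.
    by rewrite -leqNgt -(leq_exp2l _ _ q_gt1) -cardL -cardK K_full cardsT.
  exact: covering_radius_frob_code_proper aK.
have ell_eq_m : ell = m by apply/eqP; rewrite eqn_leq le_m_ell dvdn_leq.
have -> : K = [set: L] by apply/eqP; rewrite eqEcard subsetT cardsT cardK cardL ell_eq_m /=.
by apply: covering_radius_frob_code_full; rewrite ell_eq_m.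
Qed.
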